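(* Let $C$ and $D$ be two disjoint sets of first-order formulas such that $|D|\le |C|$ and, for every $\phi\in C$, $(C\cup D)\setminus\{\phi\}\nvDash \phi$. Then $C\cup D$ is equivalent to an independent set of formulas.
   Context: Classical first-order logic; the Axiom of Choice is assumed. Two sets of formulas are equivalent if every formula of each set is a consequence of the other set (equivalently, they have the same models). A set of formulas $T$ is independent if for every $\phi\in T$, $T\setminus\{\phi\}\nvDash\phi$ (equivalently, $(T\setminus\{\phi\})\cup\{\neg\phi\}$ has a model). *)

From mathcomp Require Import all_boot.
Set Implicit Arguments. Unset Strict Implicit. Unset Printing Implicit Defensive.

(* An arbitrary first-order signature: function symbols (constants are
   0-ary function symbols) and relation symbols, each with an arity. *)
Record signature := Signature {
  Fsym : Type; Fa : Fsym -> nat;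
  Rsym : Type; Ra : Rsym -> nat }.

Section FOL.
Variable S : signature.

Inductive term : Type :=
| Var : nat -> term
| Fun : forall f : Fsym S, ('I_(Fa f) -> term) -> term.

Inductive formula : Type :=
| Fal : formula
| Tru : formula
| Eq  : term -> term -> formula
| Rel : forall r : Rsym S, ('I_(Ra r) -> term) -> formula
| Neg : formula -> formula
| And : formula -> formula -> formula
| Or  : formula -> formula -> formula
| Imp : formula -> formula -> formula
| All : nat -> formula -> formula
| Ex  : nat -> formula -> formula.

Record structure := Structure {
  dom : Type;
  dom_inh : dom;
  fint : forall f : Fsym S, ('I_(Fa f) -> dom) -> dom;
  rint : forall r : Rsym S, ('I_(Ra r) -> dom) -> Prop }.

Definition upd (M : structure) (v : nat -> dom M) (n : nat) (d : dom M) :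
  nat -> dom M := fun m => if m == n then d else v m.

Fixpoint teval (M : structure) (v : nat -> dom M) (t : term) : dom M :=
  match t with
  | Var n => v n
  | Fun f a => @fint M f (fun i => teval v (a i))
  end.

Fixpoint sat (M : structure) (v : nat -> dom M) (phi : formula) : Prop :=
  match phi with
  | Fal => False
  | Tru => True
  | Eq t1 t2 => teval v t1 = teval v t2
  | Rel r a => @rint M r (fun i => teval v (a i))
  | Neg p => ~ sat v p
  | And p q => sat v p /\ sat v q
  | Or p q => sat v p \/ sat v q
  | Imp p q => sat v p -> sat v q
  | All n p => forall d : dom M, sat (upd v n d) p
  | Ex n p => exists d : dom M, sat (upd v n d) p
  end.

Definition fset := formula -> Prop.

Definition entails (T : fset) (phi : formula) : Prop :=
  forall (M : structure) (v : nat -> dom M),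
    (forall psi, T psi -> sat v psi) -> sat v phi.

Definition setminus1 (T : fset) (phi : formula) : fset :=
  fun psi => T psi /\ psi <> phi.

Definition fsetU (T U : fset) : fset := fun psi => T psi \/ U psi.

Definition equivalent (T U : fset) : Prop :=
  (forall phi, U phi -> entails T phi) /\ (forall phi, T phi -> entails U phi).

Definition independent (T : fset) : Prop :=
  forall phi, T phi -> ~ entails (setminus1 T phi) phi.

Definition fdisjoint (T U : fset) : Prop := forall phi, ~ (T phi /\ U phi).

(* |D| <= |C| : there is an injection from D into C. *)
Definition card_le (D C : fset) : Prop :=
  exists f : formula -> formula,
    (forall x, D x -> C (f x)) /\
    (forall x y, D x -> D y -> f x = f y -> x = y).

End FOL.

(* Pair each formula [d] of [D] with its image [f d] under an injection
   [f : D -> C] and replace the two by their conjunction [f d /\ d]; keep the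
   formulas of [C] outside the image of [f].  The resulting set has the same
   models as [C u D].  Every member contains a formula [c] of [C] as a conjunct,
   and all the other members are consequences of [(C u D) \ {c}]: this is where
   injectivity of [f] and disjointness of [C] and [D] are used.  So if a member
   followed from the others, [c] would follow from [(C u D) \ {c}]. *)
From Stdlib Require Import Classical.
From mathcomp Require Import all_boot.

Set Implicit Arguments.
Unset Strict Implicit.

Section Entailment.
Variable S : signature.
Implicit Types (T U : fset S) (phi psi : formula S).

Lemma entails_mem T phi : T phi -> entails T phi.
Proof. by move=> Tphi M v; apply. Qed.

Lemma entails_And T phi psi :
  entails T phi -> entails T psi -> entails T (And phi psi).
Proof. by move=> Hphi Hpsi M v Hv; split; [apply: Hphi | apply: Hpsi]. Qed.

Lemma entails_trans T U phi :
  (forall psi, U psi -> entails T psi) -> entails U phi -> entails T phi.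
Proof. by move=> HTU HU M v Hv; apply: HU => psi /HTU; apply. Qed.

Lemma independent_by_witness T :
  (forall t, T t -> exists (A : fset S) (c : formula S),
     [/\ ~ entails A c, forall M v, @sat S M v t -> sat v c
       & forall psi, setminus1 T t psi -> entails A psi]) ->
  independent T.
Proof.
move=> wit t Tt HTt; have [A [c [nAc tc AT]]] := wit t Tt.
by apply: nAc => M v Hv; apply: tc; apply: (entails_trans AT HTt).
Qed.

End Entailment.

Section PairUp.
Variables (S : signature) (C D : fset S) (f : formula S -> formula S).
Hypotheses (CD_disj : fdisjoint C D) (f_in_C : forall d, D d -> C (f d))
           (f_inj : forall d d', D d -> D d' -> f d = f d' -> d = d').

Definition pair_up : fset S := fun t =>
  (C t /\ ~ (exists d, D d /\ f d = t)) \/ (exists d, D d /\ t = And (f d) d).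

Lemma pair_up_equivalent : equivalent (fsetU C D) pair_up.
Proof.
split=> [t [[Ct _] | [d [Dd ->]]] | phi [Cphi | Dphi]].
- by apply: entails_mem; left.
- by apply: entails_And; apply: entails_mem; [left; apply: f_in_C | right].
- case: (classic (exists d, D d /\ f d = phi)) => [[d [Dd <-]] | notf].
  + move=> M v Hv; suff: sat v (And (f d) d) by case.
    by apply: Hv; right; exists d.
  + by apply: entails_mem; left.
- move=> M v Hv; suff: sat v (And (f phi) phi) by case.
  by apply: Hv; right; exists phi.
Qed.

Lemma pair_up_minus_unpaired c psi :
  C c -> ~ (exists d, D d /\ f d = c) -> setminus1 pair_up c psi ->
  entails (setminus1 (fsetU C D) c) psi.
Proof.
move=> Cc notf [[[Cpsi _] | [d [Dd ->]]] psi_c].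
- by apply: entails_mem; split; [left |].
- apply: entails_And; apply: entails_mem; split.
  + by left; apply: f_in_C.
  + by move=> fd_c; apply: notf; exists d.
  + by right.
  + by move=> d_c; apply: (CD_disj (phi:=c)); split; last rewrite -d_c.
Qed.

Lemma pair_up_minus_paired d psi :
  D d -> setminus1 pair_up (And (f d) d) psi ->
  entails (setminus1 (fsetU C D) (f d)) psi.
Proof.
move=> Dd [[[Cpsi notf] | [d' [Dd' ->]]] psi_fd].
- apply: entails_mem; split; [by left |].
  by move=> psi_eq; apply: notf; exists d.
- have d'_d : d' <> d by move=> d'_eq; apply: psi_fd; rewrite d'_eq.
  apply: entails_And; apply: entails_mem; split.
  + by left; apply: f_in_C.
  + by move=> /(f_inj Dd' Dd).
  + by right.
  + by move=> d'_fd; apply: (CD_disj (phi:=f d)); rewrite -{2}d'_fd; split; [apply: f_in_C |].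
Qed.

Lemma pair_up_independent :
  (forall c, C c -> ~ entails (setminus1 (fsetU C D) c) c) ->
  independent pair_up.
Proof.
move=> C_indep; apply: independent_by_witness => t [[Ct notf] | [d [Dd ->]]].
- exists (setminus1 (fsetU C D) t), t; split=> //; first exact: C_indep.
  by move=> psi; apply: pair_up_minus_unpaired.
- exists (setminus1 (fsetU C D) (f d)), (f d); split.
  + exact/C_indep/f_in_C.
  + by move=> M v [].
  + by move=> psi; apply: pair_up_minus_paired.
Qed.

End PairUp.

Theorem lemma2 (S : signature) (C D : fset S) :
  fdisjoint C D ->
  card_le D C ->
  (forall phi, C phi -> ~ entails (setminus1 (fsetU C D) phi) phi) ->
  exists T : fset S, independent T /\ equivalent (fsetU C D) T.
Proof.
move=> CD_disj [f [f_in_C f_inj]] C_indep.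
exists (pair_up C D f); split.
- exact: pair_up_independent.
- exact: pair_up_equivalent.
Qed.
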